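(* Assume the Diagonal Conjecture (DC) holds: for every $r \ge 2$, all integers $3 \le s \le t$ and all integers $k_3,\dots,k_r \ge 2$, we have $R(s,t,k_3,\dots,k_r) \ge R(s-1,t+1,k_3,\dots,k_r)$. If $\lim_{r\to\infty} R_r(3)^{1/r}$ is finite, then $\lim_{r\to\infty} R_r(k)^{1/r}$ is finite for every integer $k \ge 3$.
   Context: $R(k_1,\dots,k_r)$ denotes the multicolor Ramsey number: the least $n$ such that every coloring of the edges of $K_n$ with $r$ colors contains, for some $i$, a complete subgraph $K_{k_i}$ all of whose edges have color $i$; it is symmetric in its arguments. $R_r(k)=R(k,\dots,k)$ with $r$ arguments equal to $k$. It is known that for each $k$ the limit $\lim_{r\to\infty} R_r(k)^{1/r}$ exists (possibly infinite). *)

From Stdlib Require Import Reals ClassicalEpsilon.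
From mathcomp Require Import all_boot.

Set Implicit Arguments. Unset Strict Implicit. Unset Printing Implicit Defensive.

(* An r-colouring of the edges of K_n (r = size ks) is given by a function
   c : 'I_n -> 'I_n -> 'I_r, where the colour of the edge {x,y} with x < y is
   c x y (values with x >= y are irrelevant).
   [arrows n ks] : every such colouring contains, for some colour i, a set S
   of nth 0 ks i vertices all of whose edges have colour i. *)
Definition mono_clique (n r : nat) (c : 'I_n -> 'I_n -> 'I_r) (i : 'I_r)
  (S : {set 'I_n}) : Prop :=
  forall x y : 'I_n, x \in S -> y \in S -> (x < y)%N -> c x y = i.

Definition arrows (n : nat) (ks : seq nat) : Prop :=
  forall c : 'I_n -> 'I_n -> 'I_(size ks),
    exists (i : 'I_(size ks)) (S : {set 'I_n}),
      #|S| = nth 0%N ks i /\ mono_clique c i S.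

Definition arrowsb (n : nat) (ks : seq nat) : bool :=
  if excluded_middle_informative (arrows n ks) then true else false.

(* Multicolour Ramsey number R(k_1,...,k_r) with r = size ks: the least n
   with [arrows n ks] (defaults to 0 if no such n exists, which never happens
   for r >= 1 by Ramsey's theorem). *)
Definition ramsey (ks : seq nat) : nat :=
  match excluded_middle_informative (exists n, arrowsb n ks) with
  | left h => ex_minn h
  | right _ => 0%N
  end.

Definition ramsey_diag (r k : nat) : nat := ramsey (nseq r k).

Definition ramsey_root (k r : nat) : R :=
  Rpower (INR (ramsey_diag r k)) (/ INR r).

Definition diagonal_conjecture : Prop :=
  forall (s t : nat) (ks : seq nat),
    (3 <= s)%N -> (s <= t)%N -> all (fun k => 2 <= k)%N ks ->
    (ramsey [:: s.-1, t.+1 & ks] <= ramsey [:: s, t & ks])%N.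

(* Under the Diagonal Conjecture, trading R(s, t, ...) for R(s-1, t+1, ...) and discarding
   colours that only ask for an edge turns one colour k into k-2 colours 3, so
   R_r(k) <= R_(r(k-2))(3) and R_r(k)^(1/r) stays below (sup_m R_m(3)^(1/m))^(k-2).
   The lexicographic product of two critical colourings makes R_r(k) - 1 supermultiplicative
   in r, so by Fekete's lemma log(R_r(k) - 1)/r converges, to a finite limit by the bound. *)

From Stdlib Require Import Reals Lra Classical ClassicalEpsilon.
From mathcomp Require Import all_boot zify.
From Coquelicot Require Import Coquelicot.

Set Implicit Arguments. Unset Strict Implicit. Unset Printing Implicit Defensive.
Local Open Scope nat_scope.

Lemma arrowsbP n ks : reflect (arrows n ks) (arrowsb n ks).
Proof. by rewrite /arrowsb; case: excluded_middle_informative => h; constructor. Qed.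

Lemma ramsey_min n ks : arrows n ks -> ramsey ks <= n.
Proof.
move=> arr; rewrite /ramsey; case: excluded_middle_informative => [ex | nex].
  by case: ex_minnP => m _ min_m; apply/min_m/arrowsbP.
by case: nex; exists n; apply/arrowsbP.
Qed.

Lemma arrows_ramsey_of n ks : arrows n ks -> arrows (ramsey ks) ks.
Proof.
move=> arr; rewrite /ramsey; case: excluded_middle_informative => [ex | nex].
  by case: ex_minnP => m /arrowsbP.
by case: nex; exists n; apply/arrowsbP.
Qed.

Lemma eq_ramsey ks ks' :
  (forall n, arrows n ks <-> arrows n ks') -> ramsey ks = ramsey ks'.
Proof.
move=> eq_arr.
have [[n arr] | nex] := classic (exists n, arrows n ks).
  have arr' := proj1 (eq_arr n) arr.
  apply/eqP; rewrite eqn_leq !ramsey_min //; apply/eq_arr; exact: arrows_ramsey_of.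
have nex' : ~ exists n, arrows n ks' by move=> [n /eq_arr arr]; apply: nex; exists n.
rewrite /ramsey; case: excluded_middle_informative => [ex | _].
  by case: nex; case: ex => n /arrowsbP; exists n.
case: excluded_middle_informative => // ex'.
by case: nex'; case: ex' => n /arrowsbP; exists n.
Qed.

Lemma mono_clique0 n r (c : 'I_n -> 'I_n -> 'I_r) i : mono_clique c i set0.
Proof. by move=> x y; rewrite inE. Qed.

Lemma mono_clique2 n r (c : 'I_n -> 'I_n -> 'I_r) (x y : 'I_n) :
  x < y -> mono_clique c (c x y) [set x; y].
Proof.
move=> lt_xy a b; rewrite !inE => /orP[] /eqP-> /orP[] /eqP-> //; rewrite ?ltnn //.
by move/(ltn_trans lt_xy); rewrite ltnn.
Qed.

Lemma mono_cliqueU1 n r (c : 'I_n -> 'I_n -> 'I_r) i (v : 'I_n) (S : {set 'I_n}) :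
  (forall x, x \in S -> v < x /\ c v x = i) ->
  mono_clique c i S -> mono_clique c i (v |: S).
Proof.
move=> from_v cS x y; rewrite !inE => /predU1P[-> | xS] /predU1P[-> | yS].
- by rewrite ltnn.
- by have [] := from_v y yS.
- by have [lt_vx _] := from_v x xS; move/(ltn_trans lt_vx); rewrite ltnn.
- exact: cS.
Qed.

Lemma mono_clique_image n n' r (c : 'I_n' -> 'I_n' -> 'I_r) i
    (g : 'I_n -> 'I_n') (S : {set 'I_n}) :
  (forall x y, x \in S -> y \in S -> x < y -> g x < g y /\ c (g x) (g y) = i) ->
  mono_clique c i (g @: S) /\ #|g @: S| = #|S|.
Proof.
move=> g_mono; split.
  move=> _ _ /imsetP[x xS ->] /imsetP[y yS ->] lt_gxy.
  case: (ltngtP x y) => [lt_xy | lt_yx | /val_inj eq_xy].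
  - by have [] := g_mono x y xS yS lt_xy.
  - have [lt_gyx _] := g_mono y x yS xS lt_yx.
    by move: (ltn_trans lt_gyx lt_gxy); rewrite ltnn.
  - by move: lt_gxy; rewrite eq_xy ltnn.
apply: card_in_imset => x y xS yS eq_gxy.
case: (ltngtP x y) => [lt_xy | lt_yx | /val_inj //].
- by have [] := g_mono x y xS yS lt_xy; rewrite eq_gxy ltnn.
- by have [] := g_mono y x yS xS lt_yx; rewrite eq_gxy ltnn.
Qed.

Lemma arrows_widen m n ks : m <= n -> arrows m ks -> arrows n ks.
Proof.
move=> le_mn arr c.
have [i [S [cardS cS]]] := arr (fun x y => c (widen_ord le_mn x) (widen_ord le_mn y)).
have [] := @mono_clique_image _ _ _ c i (widen_ord le_mn) S.
  by move=> x y xS yS lt_xy; split; last exact: cS.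
by move=> cS' card_img; exists i, (widen_ord le_mn @: S); rewrite card_img.
Qed.

Lemma arrows_recolour n ks ks' (f : 'I_(size ks') -> 'I_(size ks))
    (g : 'I_(size ks) -> 'I_(size ks')) :
  cancel f g -> (forall i, nth 0 ks' (g i) = nth 0 ks i) ->
  arrows n ks -> arrows n ks'.
Proof.
move=> fK nth_g arr c.
have [i [S [cardS cS]]] := arr (fun x y => f (c x y)).
exists (g i), S; split; first by rewrite nth_g.
by move=> x y xS yS lt_xy; rewrite -(cS x y xS yS lt_xy) fK.
Qed.

Lemma arrows_perm n ks ks' : perm_eq ks ks' -> arrows n ks -> arrows n ks'.
Proof.
move=> /(perm_iotaP 0)[Is perm_Is ks_def].
have size_Is : size Is = size ks by rewrite ks_def size_map.
have mem_Is j : (j \in Is) = (j < size ks') by rewrite (perm_mem perm_Is) mem_iota.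
have Is_lt (i : 'I_(size ks)) : nth 0 Is i < size ks' by rewrite -mem_Is mem_nth ?size_Is.
have index_lt (j : 'I_(size ks')) : index (val j) Is < size ks.
  by rewrite -size_Is index_mem mem_Is; exact: ltn_ord.
apply: (@arrows_recolour n _ _ (fun j => Ordinal (index_lt j)) (fun i => Ordinal (Is_lt i))).
  by move=> j; apply: val_inj; rewrite /= nth_index ?mem_Is.
by move=> [i lt_i] /=; rewrite ks_def (nth_map 0) ?size_Is.
Qed.

Lemma ramsey_perm ks ks' : perm_eq ks ks' -> ramsey ks = ramsey ks'.
Proof.
by move=> pks; apply: eq_ramsey => n; split; apply: arrows_perm; rewrite // perm_sym.
Qed.

(* A colour demanding only an edge can be dropped: if it is used at all, its clique is there. *)
Lemma arrows_cons2 n ks : 0 < size ks -> arrows n (2 :: ks) <-> arrows n ks.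
Proof.
move=> ks_gt0; split=> arr c.
  have [i [S [cardS cS]]] := arr (fun x y => lift ord0 (c x y)).
  case: (unliftP ord0 i) cardS cS => [j -> cardS | -> /eqP/cards2P[x [y [neq_xy S_def]]]] cS.
    by exists j, S; split=> // x y xS yS /(cS x y xS yS)/lift_inj.
  have [xS yS] : x \in S /\ y \in S by rewrite S_def !inE !eqxx orbT.
  case: (ltngtP x y) => [lt_xy | lt_yx | /val_inj eq_xy].
  - by move: (cS x y xS yS lt_xy) => /(congr1 val).
  - by move: (cS y x yS xS lt_yx) => /(congr1 val).
  - by rewrite eq_xy eqxx in neq_xy.
have [[x [y [lt_xy c_xy]]] | no_ord0_edge] :=
  classic (exists x y : 'I_n, x < y /\ c x y = ord0).
  exists ord0, [set x; y]; split; first by rewrite cards2 neq_ltn lt_xy.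
  by rewrite -c_xy; exact: mono_clique2.
have [i [S [cardS cS]]] := arr (fun x y => odflt (Ordinal ks_gt0) (unlift ord0 (c x y))).
exists (lift ord0 i), S; split=> // x y xS yS lt_xy.
move: (cS x y xS yS lt_xy); case: (unliftP ord0 (c x y)) => [j -> /= -> // | c_xy].
by case: no_ord0_edge; exists x, y.
Qed.

Lemma ramsey_cons2 ks : 0 < size ks -> ramsey (2 :: ks) = ramsey ks.
Proof. by move=> ks_gt0; apply: eq_ramsey => n; exact: arrows_cons2. Qed.

Section DiagonalConjecture.

Hypothesis DC : diagonal_conjecture.

(* Induction on k: R(k+1, M) = R(2, k+1, M) <= R(3, k, M) by the Diagonal Conjecture. *)
Lemma ramsey_cons_le_threes k ks : 3 <= k -> all (leq 2) ks ->
  ramsey (k :: ks) <= ramsey (nseq (k - 2) 3 ++ ks).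
Proof.
move=> /subnK <-; rewrite addn3; elim: (k - 3) ks => [|j IH] ks ks_ge2 //.
rewrite -(@ramsey_cons2 (j.+4 :: ks)) // (leq_trans (DC (s := 3) _ _ ks_ge2)) //.
rewrite (@ramsey_perm _ [:: j.+3, 3 & ks]); last by rewrite (perm_catCA [:: 3] [:: j.+3]).
apply: leq_trans (IH (3 :: ks) _) _; first by rewrite /= ks_ge2.
by rewrite !subSS !subn0 -(addn1 j.+1) nseqD -catA.
Qed.

Lemma ramsey_diag_le_threes r k : 3 <= k -> ramsey_diag r k <= ramsey_diag (r * (k - 2)) 3.
Proof.
move=> k_ge3; have k_ge2 : 2 <= k := ltnW k_ge3.
suff chain ks : all (leq 2) ks ->
    ramsey (nseq r k ++ ks) <= ramsey (nseq (r * (k - 2)) 3 ++ ks).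
  by have := chain [::] isT; rewrite !cats0.
elim: r ks => [|r IH] ks ks_ge2 //=.
apply: leq_trans (ramsey_cons_le_threes _ _) _ => //.
  by rewrite all_cat all_nseq k_ge2 orbT.
rewrite (@ramsey_perm _ (nseq r k ++ nseq (k - 2) 3 ++ ks)); last by rewrite perm_catCA.
apply: leq_trans (IH _ _) _; first by rewrite all_cat all_nseq orbT.
by rewrite catA -nseqD mulSnr.
Qed.

End DiagonalConjecture.

Lemma pigeonhole_fibre (T : finType) m q (f : T -> 'I_m) (A : {set T}) :
  0 < m -> m * q <= #|A| -> exists j, q <= #|[set x in A | f x == j]|.
Proof.
move=> m_gt0 big_A; apply/existsP; apply: contraT => /existsPn small.
have card_A : #|A| = \sum_j #|[set x in A | f x == j]|.
  rewrite -sum1_card (partition_big f xpredT) //; apply: eq_bigr => j _.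
  by rewrite -sum1_card; apply: eq_bigl => x; rewrite inE.
have : #|A| <= m * q.-1.
  rewrite card_A -[m in m * _]card_ord -sum_nat_const leq_sum // => j _.
  by move: (small j); rewrite -ltnNge; lia.
have := small (Ordinal m_gt0); rewrite -ltnNge; nia.
Qed.

Lemma sum_decr_at m (a : 'I_m -> nat) j :
  0 < a j -> \sum_i (a i - (i == j)) = (\sum_i a i).-1.
Proof.
move=> a_j_gt0; rewrite (bigD1 j) // [in RHS](bigD1 j) //= eqxx subn1.
rewrite (eq_bigr a) => [|i /negbTE ->]; last exact: subn0.
by rewrite -!subn1 addnBAC.
Qed.

Section ExistenceBound.

Variables (n m : nat) (c : 'I_n -> 'I_n -> 'I_m).
Hypothesis m_gt0 : 0 < m.

(* The least vertex v of V splits the rest by the colour of its edge to v; some class has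
   size (m+1)^(s-1) and holds, by induction, a clique that v extends or that suffices. *)
Lemma mono_clique_in_large_set s (a : 'I_m -> nat) (V : {set 'I_n}) :
  \sum_i a i = s -> m.+1 ^ s <= #|V| ->
  exists i (S : {set 'I_n}), [/\ S \subset V, #|S| = a i & mono_clique c i S].
Proof.
elim: s a V => [|s IH] a V sum_a big_V.
  exists (Ordinal m_gt0), set0; rewrite sub0set cards0; split=> //; last exact: mono_clique0.
  by apply/esym/eqP; rewrite -leqn0 -[X in _ <= X]sum_a (bigD1 (Ordinal m_gt0)) ?leq_addr.
have [[i a_i0] | a_pos] := classic (exists i, a i = 0).
  by exists i, set0; rewrite sub0set cards0 a_i0; split=> //; exact: mono_clique0.
have [x0 x0V] : exists x, x \in V by apply/card_gt0P; rewrite (leq_trans _ big_V) ?expn_gt0.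
have [v vV v_min] : exists2 v, v \in V & forall x, x \in V -> v <= x.
  by case: (arg_minnP val x0V) => v; exists v.
pose A := V :\ v.
have v_lt x : x \in A -> v < x.
  rewrite !inE ltn_neqAle => /andP[neq_xv xV]; rewrite v_min // andbT eq_sym.
  by apply: contra neq_xv => /eqP/val_inj ->.
have [j big_W] : exists j, m.+1 ^ s <= #|[set x in A | c v x == j]|.
  have card_V : #|V| = #|A|.+1 by rewrite (cardsD1 v V) vV.
  apply: pigeonhole_fibre => //; rewrite -ltnS -card_V (leq_trans _ big_V) //.
  by rewrite expnS ltn_mul2r expn_gt0 ltnSn.
have a_j_gt0 : 0 < a j by rewrite lt0n; apply/eqP => a_j0; apply: a_pos; exists j.
have sum_decr : \sum_i (a i - (i == j)) = s by rewrite sum_decr_at // sum_a.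
have [i [S [sub_S card_S cS]]] := IH _ _ sum_decr big_W.
have S_from_v x : x \in S -> [/\ x \in V, v < x & c v x = j].
  move/(subsetP sub_S); rewrite inE => /andP[xA /eqP c_vx].
  by split=> //; [move: xA; rewrite inE => /andP[] | exact: v_lt].
have [eq_ij | neq_ij] := eqVneq i j.
  exists j, (v |: S); split.
  - by apply/subsetP => x /setU1P[-> // | /S_from_v[]].
  - have v_notin_S : v \notin S by apply/negP => /S_from_v[_]; rewrite ltnn.
    by rewrite cardsU1 v_notin_S card_S eq_ij eqxx subn1 add1n prednK.
  - by apply: mono_cliqueU1 => [x /S_from_v[] |]; rewrite -?eq_ij.
exists i, S; split=> //; last by rewrite card_S (negbTE neq_ij) subn0.
by apply/subsetP => x /S_from_v[].
Qed.

End ExistenceBound.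

Lemma arrows_pow_sumn ks : 0 < size ks -> arrows ((size ks).+1 ^ sumn ks) ks.
Proof.
move=> ks_gt0 c.
have sum_ks : \sum_(i < size ks) nth 0 ks i = sumn ks by rewrite sumnE (big_nth 0) big_mkord.
have big_T : (size ks).+1 ^ sumn ks <= #|[set: 'I_((size ks).+1 ^ sumn ks)]|.
  by rewrite cardsT card_ord.
have [i [S [_ card_S cS]]] := mono_clique_in_large_set c ks_gt0 sum_ks big_T.
by exists i, S.
Qed.

Lemma not_arrowsP n ks : ~ arrows n ks ->
  exists c : 'I_n -> 'I_n -> 'I_(size ks),
    forall i S, mono_clique c i S -> #|S| <> nth 0 ks i.
Proof.
move=> not_arr; apply: NNPP => no_c; apply: not_arr => c.
apply: NNPP => no_clique; apply: no_c; exists c => i S cS card_S.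
by apply: no_clique; exists i, S.
Qed.

(* Lexicographic product: vertex x of K_(n1 n2) is the pair (x / n2, x mod n2); edges between
   blocks get the colour from ks1 of the block pair, edges inside a block the colour from ks2. *)
Lemma not_arrows_mul n1 n2 ks1 ks2 : 0 < n2 ->
  ~ arrows n1 ks1 -> ~ arrows n2 ks2 -> ~ arrows (n1 * n2) (ks1 ++ ks2).
Proof.
move=> n2_gt0 /not_arrowsP[c1 bad1] /not_arrowsP[c2 bad2] arr.
have u_lt (x : 'I_(n1 * n2)) : x %/ n2 < n1 by rewrite ltn_divLR.
have v_lt (x : 'I_(n1 * n2)) : x %% n2 < n2 by rewrite ltn_pmod.
pose u x := Ordinal (u_lt x); pose v x := Ordinal (v_lt x).
have lex (x y : 'I_(n1 * n2)) : x < y -> u x = u y -> v x < v y.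
  move=> lt_xy /(congr1 val) /= eq_u.
  by move: lt_xy (divn_eq x n2) (divn_eq y n2); rewrite eq_u; lia.
have u_mono (x y : 'I_(n1 * n2)) : x < y -> u x <= u y.
  by move=> /ltnW; exact: leq_div2r.
pose c x y := cast_ord (esym (size_cat ks1 ks2))
  (if u x != u y then lshift _ (c1 (u x) (u y)) else rshift _ (c2 (v x) (v y))).
have [i [S [card_S cS]]] := arr c.
have c_val x y : nat_of_ord (c x y) =
    if u x != u y then nat_of_ord (c1 (u x) (u y)) else size ks1 + c2 (v x) (v y).
  by rewrite /c; case: ifP.
case: (splitP (cast_ord (size_cat ks1 ks2) i)) => [i1 | i2] /= i_def.
  have block x y : x \in S -> y \in S -> x < y -> u x < u y /\ c1 (u x) (u y) = i1.
    move=> xS yS lt_xy; have := congr1 (@nat_of_ord _) (cS x y xS yS lt_xy).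
    rewrite c_val i_def; case: eqVneq => [_ /= eq_c | neq_u /= /val_inj -> //].
      by have := ltn_ord i1; rewrite -eq_c ltnNge leq_addr.
    by rewrite ltn_neqAle neq_u u_mono.
  have [cS1 card_uS] := mono_clique_image block.
  by apply: (bad1 _ _ cS1); rewrite card_uS card_S nth_cat i_def ltn_ord.
have inner x y : x \in S -> y \in S -> x < y -> v x < v y /\ c2 (v x) (v y) = i2.
  move=> xS yS lt_xy; have := congr1 (@nat_of_ord _) (cS x y xS yS lt_xy).
  rewrite c_val i_def; case: eqVneq => [eq_u /= /eqP | _ /= eq_c].
    by rewrite eqn_add2l => /eqP/val_inj ->; split=> //; exact: lex.
  by have := ltn_ord (c1 (u x) (u y)); rewrite eq_c ltnNge leq_addr.
have [cS2 card_vS] := mono_clique_image inner.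
by apply: (bad2 _ _ cS2); rewrite card_vS card_S nth_cat i_def ltnNge leq_addr addKn.
Qed.

Lemma arrows_ramsey ks : 0 < size ks -> arrows (ramsey ks) ks.
Proof. by move=> ks_gt0; apply: arrows_ramsey_of (arrows_pow_sumn ks_gt0). Qed.

Lemma ramsey_pred_not_arrows ks : 0 < ramsey ks -> ~ arrows (ramsey ks).-1 ks.
Proof. by move=> R_gt0 /ramsey_min; rewrite leqNgt ltn_predL R_gt0. Qed.

Lemma ramsey_diag_ge n k : 0 < n -> k <= ramsey_diag n k.
Proof.
move=> n_gt0; rewrite leqNgt; apply/negP => lt_Rk.
have size_gt0 : 0 < size (nseq n k) by rewrite size_nseq.
have le_R : ramsey_diag n k <= k.-1 by rewrite -ltnS prednK // (leq_ltn_trans _ lt_Rk).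
have [i [S [card_S _]]] :=
  arrows_widen le_R (arrows_ramsey size_gt0) (fun _ _ => Ordinal size_gt0).
have i_lt : i < n by rewrite -[X in _ < X](size_nseq n k).
by have := max_card S; rewrite card_ord card_S nth_nseq i_lt; lia.
Qed.

Lemma ramsey_diag_pred_supermul k a b : 2 <= k -> 0 < a -> 0 < b ->
  (ramsey_diag a k).-1 * (ramsey_diag b k).-1 <= (ramsey_diag (a + b) k).-1.
Proof.
move=> k_ge2 a_gt0 b_gt0.
have R_gt1 r : 0 < r -> 1 < ramsey_diag r k.
  by move=> r_gt0; apply: leq_trans k_ge2 (ramsey_diag_ge _ r_gt0).
have R_gt0 r : 0 < r -> 0 < ramsey_diag r k by move/R_gt1/ltnW.
have no_arr : ~ arrows ((ramsey_diag a k).-1 * (ramsey_diag b k).-1) (nseq (a + b) k).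
  rewrite nseqD; apply: not_arrows_mul; first by rewrite -subn1 subn_gt0 R_gt1.
  - exact: ramsey_pred_not_arrows (R_gt0 a a_gt0).
  - exact: ramsey_pred_not_arrows (R_gt0 b b_gt0).
rewrite leqNgt; apply/negP => lt_R; apply: no_arr.
apply: arrows_widen (arrows_ramsey _); last by rewrite size_nseq addn_gt0 a_gt0.
by rewrite -ltnS prednK ?R_gt0 ?addn_gt0 ?a_gt0 in lt_R.
Qed.

Local Open Scope R_scope.

Lemma INR_gt0 n : (0 < n)%N -> 0 < INR n.
Proof. by move=> n_gt0; apply: lt_0_INR; apply/ltP. Qed.

Section Fekete.

Variable y : nat -> R.
Hypothesis y_ge0 : forall n, (0 < n)%N -> 0 <= y n.
Hypothesis y_superadd : forall a b, (0 < a)%N -> (0 < b)%N -> y a + y b <= y (a + b).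

Lemma superadditive_mul q m s : (0 < m)%N -> (0 < s)%N ->
  INR q * y m + y s <= y (q * m + s).
Proof.
move=> m_gt0 s_gt0; elim: q => [|q IH]; first by rewrite mul0n add0n /=; lra.
rewrite S_INR mulSn -addnA.
apply: Rle_trans (y_superadd m_gt0 _); last by rewrite addn_gt0 s_gt0 orbT.
lra.
Qed.

(* Write n = q m + s with 0 < s <= m; then q m >= n - m and y n >= q y m. *)
Lemma superadditive_lower m n : (0 < m)%N -> (0 < n)%N ->
  (INR n - INR m) * y m <= INR m * y n.
Proof.
move=> m_gt0 n_gt0.
set q := (n.-1 %/ m)%N; set s := (n.-1 %% m).+1.
have n_def : n = (q * m + s)%N by rewrite addnS -divn_eq prednK.
have qm_ge : INR n - INR m <= INR q * INR m.
  have : (n <= q * m + m)%N by rewrite {1}n_def leq_add2l ltn_pmod.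
  by move/leP/le_INR; rewrite plus_INR mult_INR; lra.
have := superadditive_mul q m_gt0 (isT : (0 < s)%N); rewrite -n_def.
have := y_ge0 m_gt0; have := y_ge0 (isT : (0 < s)%N); have := pos_INR m.
nra.
Qed.

(* Fekete: the ratios converge to their supremum. *)
Lemma superadditive_ratio_cv C : (forall n, (0 < n)%N -> y n / INR n <= C) ->
  exists L, Un_cv (fun n => y n / INR n) L.
Proof.
move=> bounded.
pose E v := exists2 n, (0 < n)%N & v = y n / INR n.
have E_bound : bound E by exists C => _ [n n_gt0 ->]; exact: bounded.
have E_inhabited : exists v, E v by exists (y 1%N / INR 1), 1%N.
have [L [L_ub L_least]] := completeness E E_bound E_inhabited.
exists L => eps eps_gt0.
have [m m_gt0 near_L] : exists2 m, (0 < m)%N & L - eps / 2 < y m / INR m.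
  apply: NNPP => none; suff : L <= L - eps / 2 by lra.
  by apply: L_least => _ [m m_gt0 ->]; apply: Rnot_lt_le => lt_m; apply: none; exists m.
have [N N_large] := INR_unbounded (2 * y m / eps).
exists (N + m)%N => n n_ge; rewrite /R_dist.
have n_gt0 : (0 < n)%N by apply/ltP; lia.
have le_L : y n / INR n <= L by apply: L_ub; exists n.
have lower := superadditive_lower m_gt0 n_gt0.
have m_pos := INR_gt0 m_gt0; have n_pos := INR_gt0 n_gt0.
have le_Nn : INR N <= INR n by apply: le_INR; lia.
move: near_L; rewrite -Rlt_div_r // => near_L.
have small_m : 2 * y m < INR n * eps by rewrite -Rlt_div_l //; lra.
suff : L - eps < y n / INR n by rewrite Rabs_left1; lra.
rewrite -Rlt_div_r //; apply: (Rmult_lt_reg_l (INR m)) => //.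
have := Rmult_lt_compat_r (INR n) _ _ n_pos near_L.
have := Rmult_lt_compat_l (INR m) _ _ m_pos small_m.
lra.
Qed.

End Fekete.

Lemma ln_ratio_cv_squeeze (x z : nat -> R) L :
  (forall n, (0 < n)%N -> 1 <= x n <= z n /\ z n <= 2 * x n) ->
  Un_cv (fun n => ln (x n) / INR n) L -> Un_cv (fun n => ln (z n) / INR n) L.
Proof.
move=> xz /is_lim_seq_Reals cv_x; apply/is_lim_seq_Reals.
have inv_n : is_lim_seq (fun n => / INR n) 0 := is_lim_seq_inv _ _ is_lim_seq_INR ltac:(done).
have := is_lim_seq_plus' _ _ _ _ cv_x (is_lim_seq_scal_l _ (ln 2) _ inv_n).
rewrite /= Rmult_0_r Rplus_0_r; apply: is_lim_seq_le_le_loc cv_x.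
exists 1%N => n /leP n_gt0.
have [[x_ge1 le_xz] le_z2x] := xz n n_gt0.
have inv_n_ge0 : 0 <= / INR n by apply: Rlt_le; apply: Rinv_0_lt_compat; exact: INR_gt0.
rewrite /Rdiv -Rmult_plus_distr_r Rplus_comm; split; apply: Rmult_le_compat_r => //.
  by apply: ln_le; lra.
by rewrite -ln_mult; first apply: ln_le; lra.
Qed.

Lemma ramsey_root_exp k r : ramsey_root k r = exp (ln (INR (ramsey_diag r k)) / INR r).
Proof. by rewrite /ramsey_root /Rpower /Rdiv Rmult_comm. Qed.

Lemma ln_ramsey_diag_le k r B : (0 < r)%N -> ramsey_root k r <= B ->
  ln (INR (ramsey_diag r k)) <= INR r * ln B.
Proof.
move=> /INR_gt0 r_pos; rewrite ramsey_root_exp Rmult_comm -Rle_div_l // => le_B.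
by rewrite -[X in X <= _]ln_exp; apply: ln_le; first exact: exp_pos.
Qed.

Lemma ramsey_diag_pred_ge1 k n : (2 <= k)%N -> (0 < n)%N -> 1 <= INR (ramsey_diag n k).-1.
Proof.
move=> k_ge2 n_gt0; apply: (le_INR 1); apply/leP.
by rewrite -subn1 subn_gt0 (leq_trans k_ge2) ?ramsey_diag_ge.
Qed.

Lemma ln_ramsey_diag_pred_superadditive k a b : (2 <= k)%N -> (0 < a)%N -> (0 < b)%N ->
  ln (INR (ramsey_diag a k).-1) + ln (INR (ramsey_diag b k).-1)
    <= ln (INR (ramsey_diag (a + b) k).-1).
Proof.
move=> k_ge2 a_gt0 b_gt0.
have ge1_a := ramsey_diag_pred_ge1 k_ge2 a_gt0.
have ge1_b := ramsey_diag_pred_ge1 k_ge2 b_gt0.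
rewrite -ln_mult; try lra.
apply: ln_le; first nra.
rewrite -mult_INR; apply: le_INR; apply/leP; exact: ramsey_diag_pred_supermul.
Qed.

Lemma ln_ramsey_diag_pred_ratio_le k B n : diagonal_conjecture -> (3 <= k)%N ->
  (forall m, ramsey_root 3 m <= B) -> (0 < n)%N ->
  ln (INR (ramsey_diag n k).-1) / INR n <= INR (k - 2) * ln B.
Proof.
move=> DC k_ge3 bound3 n_gt0.
have m_gt0 : (0 < n * (k - 2))%N by rewrite muln_gt0 n_gt0 subn_gt0.
have n_pos := INR_gt0 n_gt0.
have ln_le_3 : ln (INR (ramsey_diag n k).-1) <= ln (INR (ramsey_diag (n * (k - 2)) 3)).
  apply: ln_le; first by have := ramsey_diag_pred_ge1 (ltnW k_ge3) n_gt0; lra.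
  by apply: le_INR; apply/leP; rewrite (leq_trans (leq_pred _)) ?ramsey_diag_le_threes.
have := ln_ramsey_diag_le m_gt0 (bound3 _); rewrite mult_INR.
rewrite Rle_div_l //; lra.
Qed.

Theorem theorem2 :
  diagonal_conjecture ->
  (exists l : R, Un_cv (ramsey_root 3) l) ->
  forall k : nat, (3 <= k)%N -> exists l : R, Un_cv (ramsey_root k) l.
Proof.
move=> DC [l3 cv3] k k_ge3; have k_ge2 : (2 <= k)%N := ltnW k_ge3.
have [B [_ bound3]] := maj_by_pos (ramsey_root 3) (exist _ l3 cv3).
have [L cv_pred] : exists L, Un_cv (fun n => ln (INR (ramsey_diag n k).-1) / INR n) L.
  apply: (@superadditive_ratio_cv _ _ _ (INR (k - 2) * ln B)) => [n n_gt0 | a b | n].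
  - by rewrite -ln_1; apply: ln_le; [lra | exact: ramsey_diag_pred_ge1].
  - exact: ln_ramsey_diag_pred_superadditive.
  - apply: ln_ramsey_diag_pred_ratio_le => // m.
    exact: Rle_trans (Rle_abs _) (bound3 m).
have cv_ln : Un_cv (fun n => ln (INR (ramsey_diag n k)) / INR n) L.
  apply: ln_ratio_cv_squeeze cv_pred => n n_gt0.
  have := ramsey_diag_pred_ge1 k_ge2 n_gt0.
  have R_gt0 : (0 < ramsey_diag n k)%N := leq_trans (ltnW k_ge2) (ramsey_diag_ge k n_gt0).
  have -> : INR (ramsey_diag n k) = INR (ramsey_diag n k).-1 + 1 by rewrite -S_INR prednK.
  lra.
exists (exp L); apply: Un_cv_ext (fun n => esym (ramsey_root_exp k n)) _ _.
exact: continuity_seq (derivable_continuous_pt _ _ (derivable_pt_exp L)) cv_ln.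
Qed.
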